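(* Let $p$ be a prime and let $C_p=\{I\subset\mathbf{R}\mid I \text{ a subgroup with } I\cong\mathbf{Z}[1/p] \text{ as abelian groups}\}$. For $I_1,I_2\in C_p$ define $I_1\cdot I_2$ to be the subgroup of $\mathbf{R}$ generated by $\{xy\mid x\in I_1,\ y\in I_2\}$. Then $C_p$ is an abelian group under this operation. *)

From Stdlib Require Export Reals ZArith Znumtheory.
Open Scope R_scope.

Definition is_subgroup (A : R -> Prop) : Prop :=
  A 0 /\ (forall x y, A x -> A y -> A (x - y)).

(* Z[1/p], realized as the additive subgroup {a / p^n | a in Z, n in N} of R. *)
Definition Zinvp (p : nat) : R -> Prop :=
  fun x => exists (a : Z) (n : nat), x = IZR a / (INR p) ^ n.

Definition group_iso_sub (A B : R -> Prop) : Prop :=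
  exists f : R -> R,
    (forall x y, A x -> A y -> f (x + y) = f x + f y) /\
    (forall x, A x -> B (f x)) /\
    (forall x y, A x -> A y -> f x = f y -> x = y) /\
    (forall y, B y -> exists x, A x /\ f x = y).

Definition Cp (p : nat) (I : R -> Prop) : Prop :=
  is_subgroup I /\ group_iso_sub I (Zinvp p).

Definition gen_subgroup (S : R -> Prop) : R -> Prop :=
  fun x => forall H, is_subgroup H -> (forall s, S s -> H s) -> H x.

Definition subgroup_mul (I1 I2 : R -> Prop) : R -> Prop :=
  gen_subgroup (fun z => exists x y, I1 x /\ I2 y /\ z = x * y).

(* Every I in C_p is a rescaling c Z[1/p] with c <> 0: take c to be the
   preimage of 1 under an isomorphism I -> Z[1/p]; additivity and
   injectivity force p^n x = a c whenever x corresponds to a / p^n.  Since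
   Z[1/p] is a ring containing 1, the product of c Z[1/p] and d Z[1/p] is
   c d Z[1/p], so the operation on C_p is that of the group R^x of nonzero
   reals, from which associativity, commutativity, the unit Z[1/p] and the
   inverse (1/c) Z[1/p] are inherited. *)
From Stdlib Require Import Lra Lia FunctionalExtensionality PropExtensionality.

Lemma pred_ext (P Q : R -> Prop) : (forall x, P x <-> Q x) -> P = Q.
Proof.
  intros hPQ; apply functional_extensionality; intros x.
  apply propositional_extensionality; auto.
Qed.

Section Subgroup.
Variable I : R -> Prop.
Hypothesis I_subgroup : is_subgroup I.

Lemma subgroup_opp x : I x -> I (- x).
Proof.
  destruct I_subgroup as [I0 Isub]; intros hx.
  replace (- x) with (0 - x) by ring; auto.
Qed.

Lemma subgroup_add x y : I x -> I y -> I (x + y).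
Proof.
  destruct I_subgroup as [_ Isub]; intros hx hy.
  replace (x + y) with (x - - y) by ring; auto using subgroup_opp.
Qed.

Lemma subgroup_INR_mul n x : I x -> I (INR n * x).
Proof.
  intros hx; induction n as [|n IH].
  - rewrite Rmult_0_l; exact (proj1 I_subgroup).
  - rewrite S_INR, Rmult_plus_distr_r, Rmult_1_l; auto using subgroup_add.
Qed.

Lemma subgroup_IZR_mul a x : I x -> I (IZR a * x).
Proof.
  intros hx; destruct (Z.le_ge_cases 0 a) as [ha | ha].
  - rewrite <- (Z2Nat.id a ha), <- INR_IZR_INZ; auto using subgroup_INR_mul.
  - replace a with (- Z.of_nat (Z.to_nat (- a)))%Z by lia.
    rewrite opp_IZR, <- INR_IZR_INZ, Ropp_mult_distr_l_reverse.
    auto using subgroup_opp, subgroup_INR_mul.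
Qed.

Lemma gen_subgroup_incl (S : R -> Prop) :
  (forall s, S s -> I s) -> forall x, gen_subgroup S x -> I x.
Proof. intros hS x hx; exact (hx I I_subgroup hS). Qed.

Section Additive.
Variable f : R -> R.
Hypothesis f_add : forall x y, I x -> I y -> f (x + y) = f x + f y.

Lemma additive_0 : f 0 = 0.
Proof.
  pose proof (f_add 0 0 (proj1 I_subgroup) (proj1 I_subgroup)) as h.
  rewrite Rplus_0_r in h; lra.
Qed.

Lemma additive_opp x : I x -> f (- x) = - f x.
Proof.
  intros hx; pose proof (f_add x (- x) hx (subgroup_opp x hx)) as h.
  rewrite Rplus_opp_r, additive_0 in h; lra.
Qed.

Lemma additive_INR_mul n x : I x -> f (INR n * x) = INR n * f x.
Proof.
  intros hx; induction n as [|n IH].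
  - rewrite !Rmult_0_l; exact additive_0.
  - rewrite S_INR, !Rmult_plus_distr_r, !Rmult_1_l, f_add, IH;
      auto using subgroup_INR_mul.
Qed.

Lemma additive_IZR_mul a x : I x -> f (IZR a * x) = IZR a * f x.
Proof.
  intros hx; destruct (Z.le_ge_cases 0 a) as [ha | ha].
  - rewrite <- (Z2Nat.id a ha), <- INR_IZR_INZ; auto using additive_INR_mul.
  - replace a with (- Z.of_nat (Z.to_nat (- a)))%Z by lia.
    rewrite opp_IZR, <- INR_IZR_INZ, !Ropp_mult_distr_l_reverse, additive_opp,
      additive_INR_mul; auto using subgroup_INR_mul.
Qed.

Lemma injective_additive_IZR_relation (f_inj : forall x y, I x -> I y -> f x = f y -> x = y)
  k a x y : I x -> I y -> IZR k * f x = IZR a * f y -> IZR k * x = IZR a * y.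
Proof.
  intros hx hy hf; apply f_inj; auto using subgroup_IZR_mul.
  rewrite !additive_IZR_mul; auto.
Qed.

End Additive.
End Subgroup.

Section Scale.
Variable A : R -> Prop.
Hypothesis A_subgroup : is_subgroup A.
Hypothesis A_1 : A 1.
Hypothesis A_mul : forall x y, A x -> A y -> A (x * y).

Definition scale (c : R) : R -> Prop := fun x => exists z, A z /\ x = c * z.

Lemma scale_subgroup c : is_subgroup (scale c).
Proof.
  destruct A_subgroup as [A0 Asub]; split.
  - exists 0; split; [exact A0 | ring].
  - intros x y [z [hz ->]] [w [hw ->]]; exists (z - w); split; [auto | ring].
Qed.

Lemma scale_iso c : c <> 0 -> group_iso_sub (scale c) A.
Proof.
  intros hc; exists (fun x => x / c); repeat split.
  - intros x y _ _; field; exact hc.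
  - intros x [z [hz ->]]; replace (c * z / c) with z by (field; exact hc); exact hz.
  - intros x y _ _ h; apply (Rmult_eq_reg_r (/ c)); auto using Rinv_neq_0_compat.
  - intros y hy; exists (c * y); split; [exists y; auto | field; exact hc].
Qed.

Lemma subgroup_mul_scale c d : subgroup_mul (scale c) (scale d) = scale (c * d).
Proof.
  apply pred_ext; intros x; split.
  - apply gen_subgroup_incl; [apply scale_subgroup |].
    intros s [u [v [[z [hz ->]] [[w [hw ->]] ->]]]].
    exists (z * w); split; [auto | ring].
  - intros [z [hz ->]] H _ hH; apply hH.
    exists (c * 1), (d * z); repeat split.
    + exists 1; auto.
    + exists z; auto.
    + ring.
Qed.

End Scale.

Section Zinvp.
Variable p : nat.
Hypothesis p_neq0 : p <> 0%nat.

Lemma pow_p_neq0 n : INR p ^ n <> 0.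
Proof. apply pow_nonzero, not_0_INR, p_neq0. Qed.

Lemma IZR_pow_p n : IZR (Z.of_nat p ^ Z.of_nat n) = INR p ^ n.
Proof. rewrite <- pow_IZR, <- INR_IZR_INZ; reflexivity. Qed.

Lemma Zinvp_1 : Zinvp p 1.
Proof. exists 1%Z, 0%nat; simpl; field. Qed.

Lemma Zinvp_subgroup : is_subgroup (Zinvp p).
Proof.
  split; [exists 0%Z, 0%nat; simpl; field |].
  intros x y [a [n ->]] [b [m ->]].
  exists (a * Z.of_nat p ^ Z.of_nat m - b * Z.of_nat p ^ Z.of_nat n)%Z, (n + m)%nat.
  rewrite minus_IZR, !mult_IZR, !IZR_pow_p, pow_add.
  field; split; apply pow_p_neq0.
Qed.

Lemma Zinvp_mul x y : Zinvp p x -> Zinvp p y -> Zinvp p (x * y).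
Proof.
  intros [a [n ->]] [b [m ->]]; exists (a * b)%Z, (n + m)%nat.
  rewrite mult_IZR, pow_add; field; split; apply pow_p_neq0.
Qed.

Notation scale_Zinvp := (scale (Zinvp p)).

Section Iso.
Variables (I : R -> Prop) (f : R -> R) (c : R).
Hypothesis I_subgroup : is_subgroup I.
Hypothesis f_add : forall x y, I x -> I y -> f (x + y) = f x + f y.
Hypothesis f_into : forall x, I x -> Zinvp p (f x).
Hypothesis f_inj : forall x y, I x -> I y -> f x = f y -> x = y.
Hypothesis f_onto : forall y, Zinvp p y -> exists x, I x /\ f x = y.
Hypothesis Ic : I c.
Hypothesis fc : f c = 1.

Lemma iso_subset_scale x : I x -> scale_Zinvp c x.
Proof.
  intros hx; destruct (f_into x hx) as [a [n hfx]].
  assert (hpn : IZR (Z.of_nat p ^ Z.of_nat n) * x = IZR a * c).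
  { apply (injective_additive_IZR_relation I I_subgroup f f_add f_inj); auto.
    rewrite hfx, fc, IZR_pow_p; field; apply pow_p_neq0. }
  rewrite IZR_pow_p in hpn.
  exists (IZR a / INR p ^ n); split; [exists a, n; reflexivity |].
  apply (Rmult_eq_reg_l (INR p ^ n)); [| apply pow_p_neq0].
  rewrite hpn; field; apply pow_p_neq0.
Qed.

Lemma scale_subset_iso x : scale_Zinvp c x -> I x.
Proof.
  intros [z [[a [n ->]] ->]].
  destruct (f_onto (1 / INR p ^ n)) as [y [hy fy]]; [exists 1%Z, n; reflexivity |].
  assert (hpn : IZR (Z.of_nat p ^ Z.of_nat n) * y = IZR 1 * c).
  { apply (injective_additive_IZR_relation I I_subgroup f f_add f_inj); auto.
    rewrite fy, fc, IZR_pow_p; field; apply pow_p_neq0. }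
  rewrite IZR_pow_p, Rmult_1_l in hpn.
  replace (c * (IZR a / INR p ^ n)) with (IZR a * y)
    by (rewrite <- hpn; field; apply pow_p_neq0).
  exact (subgroup_IZR_mul I I_subgroup a y hy).
Qed.

End Iso.

Lemma Cp_iff_scale I : Cp p I <-> exists c, c <> 0 /\ I = scale_Zinvp c.
Proof.
  split.
  - intros [hI [f [f_add [f_into [f_inj f_onto]]]]].
    destruct (f_onto 1 Zinvp_1) as [c [Ic fc]].
    exists c; split.
    + intros ->; rewrite (additive_0 I hI f f_add) in fc; lra.
    + apply pred_ext; intros x; split.
      * eapply iso_subset_scale; eassumption.
      * eapply scale_subset_iso; eassumption.
  - intros [c [hc ->]]; split;
      auto using scale_subgroup, scale_iso, Zinvp_subgroup.
Qed.

Lemma subgroup_mul_scale_Zinvp c d :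
  subgroup_mul (scale_Zinvp c) (scale_Zinvp d) = scale_Zinvp (c * d).
Proof. apply subgroup_mul_scale; auto using Zinvp_subgroup, Zinvp_1, Zinvp_mul. Qed.

End Zinvp.

Theorem proposition6p1 (p : nat) (hp : prime (Z.of_nat p)) :
  (forall I1 I2, Cp p I1 -> Cp p I2 -> Cp p (subgroup_mul I1 I2)) /\
  (forall I1 I2 I3, Cp p I1 -> Cp p I2 -> Cp p I3 ->
     subgroup_mul (subgroup_mul I1 I2) I3 = subgroup_mul I1 (subgroup_mul I2 I3)) /\
  (forall I1 I2, Cp p I1 -> Cp p I2 -> subgroup_mul I1 I2 = subgroup_mul I2 I1) /\
  (exists E, Cp p E /\
     (forall I, Cp p I -> subgroup_mul E I = I /\ subgroup_mul I E = I) /\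
     (forall I, Cp p I -> exists J, Cp p J /\
        subgroup_mul I J = E /\ subgroup_mul J I = E)).
Proof.
  assert (p_neq0 : p <> 0%nat) by (apply prime_ge_2 in hp; lia).
  pose proof (Cp_iff_scale p p_neq0) as Cp_scale.
  pose proof (subgroup_mul_scale_Zinvp p p_neq0) as mul_scale.
  split; [| split; [| split]].
  - intros I1 I2 [c [hc ->]]%Cp_scale [d [hd ->]]%Cp_scale.
    apply Cp_scale; exists (c * d); split; [apply Rmult_integral_contrapositive; auto |].
    apply mul_scale.
  - intros I1 I2 I3 [c [_ ->]]%Cp_scale [d [_ ->]]%Cp_scale [e [_ ->]]%Cp_scale.
    rewrite !mul_scale, Rmult_assoc; reflexivity.
  - intros I1 I2 [c [_ ->]]%Cp_scale [d [_ ->]]%Cp_scale.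
    rewrite !mul_scale, Rmult_comm; reflexivity.
  - exists (scale (Zinvp p) 1); split; [| split].
    + apply Cp_scale; exists 1; split; [lra | reflexivity].
    + intros I [c [_ ->]]%Cp_scale; rewrite !mul_scale, Rmult_1_l, Rmult_1_r; auto.
    + intros I [c [hc ->]]%Cp_scale; exists (scale (Zinvp p) (/ c)); split; [| split].
      * apply Cp_scale; exists (/ c); split; [apply Rinv_neq_0_compat |]; auto.
      * rewrite mul_scale, Rinv_r; auto.
      * rewrite mul_scale, Rinv_l; auto.
Qed.
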